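(* Let $H = -\Delta + V$ on $\ell^2(\mathbb{Z}^d)$, with $V$ a real-valued potential, and let $E$ be an eigenvalue of $H$ having two linearly independent eigenfunctions $\varphi_1,\varphi_2\in\ell^2(\mathbb{Z}^d)$, each with $\beta$-decay for some $\beta > \frac d2$. Then there exists a constant $C = C_{d,\beta,\varphi_1,\varphi_2}<\infty$ (depending only on $d,\beta,\varphi_1,\varphi_2$) such that, setting $\varepsilon_L = C L^{-\beta+\frac d2}$ and $J_L = [E-\varepsilon_L, E+\varepsilon_L]$, we have $\operatorname{tr}\chi_{J_L}(H_L)\ge 2$ for all sufficiently large $L$.
   Context: $\Delta(x,y)=1$ if $|x-y|=1$ and $\Delta(x,y)=0$ otherwise; $V$ acts by multiplication. Write $\langle x\rangle=\sqrt{1+|x|^2}$; $\varphi\in\ell^2(\mathbb{Z}^d)$ has $\beta$-decay if $|\varphi(x)|\le C_\varphi\langle x\rangle^{-\beta}$ for all $x$ and some $C_\varphi<\infty$. For $L>0$, $\Lambda_L$ is the open box in $\mathbb{Z}^d$ centered at the origin with side of length $L$, $\chi_L$ its characteristic function, and $H_L=\chi_L H\chi_L$ is the restriction of $H$ to $\ell^2(\Lambda_L)$ with zero boundary conditions outside $\Lambda_L$ (identifying $\ell^2(\Lambda_L)$ with $\chi_L\ell^2(\mathbb{Z}^d)$). For a set $J$, $\chi_J$ denotes its characteristic function, so $\chi_J(H_L)$ is the spectral projection of $H_L$ onto $J$. *)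

From HB Require Import structures.
From mathcomp Require Import all_boot all_order all_algebra.
From mathcomp Require Import all_classical all_reals all_analysis.
From mathcomp Require Import polyrcf.
Set Implicit Arguments. Unset Strict Implicit. Unset Printing Implicit Defensive.
Import Order.TTheory GRing.Theory Num.Theory.
Local Open Scope ring_scope.

Section Defs.
Variable R : realType.

Definition Zd (d : nat) := 'rV[int]_d.

Definition normsq {d} (x : Zd d) : R := \sum_(i < d) ((x 0 i)%:~R) ^+ 2.
Definition japan {d} (x : Zd d) : R := Num.sqrt (1 + normsq x).

Definition Delta {d} (x y : Zd d) : R := if normsq (x - y) == 1 then 1 else 0.

Definition evec d (i : 'I_d) : Zd d := delta_mx 0 i.

(* (H phi)(x) = -(Delta phi)(x) + V(x) phi(x), where
   (Delta phi)(x) = sum_{|y - x| = 1} phi(y) = sum_i (phi(x+e_i) + phi(x-e_i)). *)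
Definition Hop {d} (V : Zd d -> R) (phi : Zd d -> R) (x : Zd d) : R :=
  - (\sum_(i < d) (phi (x + evec i) + phi (x - evec i))) + V x * phi x.

Definition sq_summable {d} (phi : Zd d -> R) : Prop :=
  (\esum_(x in [set: Zd d]) ((phi x) ^+ 2)%:E < +oo)%E.

Definition has_decay {d} (beta : R) (phi : Zd d -> R) : Prop :=
  exists Cphi : R, forall x : Zd d, `|phi x| <= Cphi * (japan x) `^ (- beta).

Definition lin_indep2 {d} (phi1 phi2 : Zd d -> R) : Prop :=
  forall a b : R, (forall x, a * phi1 x + b * phi2 x = 0) -> a = 0 /\ b = 0.

(* Open box Lambda_L = (-L/2, L/2)^d  intersected with Z^d, enumerated as a
   (duplicate free) sequence: coordinates are searched in [-K, K] with
   K = |floor L| + 1 > L/2, then filtered. *)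
Definition boxK (L : R) : nat := (`|Num.floor L|%N).+1.
Definition in_box {d} (L : R) (x : Zd d) : bool :=
  [forall i : 'I_d, `|(x 0 i)%:~R| < L / 2 :> R].
Definition box_pts d (L : R) : seq (Zd d) :=
  [seq x <- map (fun f : {ffun 'I_d -> 'I_((boxK L).*2.+1)} =>
                    (\row_i ((nat_of_ord (f i))%:Z - (boxK L)%:Z) : Zd d))
             (enum {ffun 'I_d -> 'I_((boxK L).*2.+1)}) | in_box L x].

(* H_L = chi_L H chi_L as a matrix on l^2(Lambda_L), in the basis of point masses. *)
Definition HL {d} (V : Zd d -> R) (L : R) : 'M[R]_(size (box_pts d L)) :=
  \matrix_(i, j) (- Delta (box_pts d L)`_i (box_pts d L)`_j
                  + (i == j)%:R * V (box_pts d L)`_i).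

(* tr chi_J(A) for a (symmetric) real matrix A: the trace of the spectral
   projection onto the span of the eigenspaces for the eigenvalues in J,
   i.e. the dimension of that span. *)
Definition tr_specproj n (J : interval R) (A : 'M[R]_n) : nat :=
  \rank (\sum_(a <- rootsR (char_poly A) | a \in J) eigenspace A a)%MS.

End Defs.

From HB Require Import structures.
From mathcomp Require Import all_boot all_order all_algebra.
From mathcomp Require Import all_classical all_reals all_analysis.
From mathcomp Require Import polyrcf complex spectral.
From mathcomp Require Import lra zify ring.
Set Implicit Arguments. Unset Strict Implicit. Unset Printing Implicit Defensive.
Import Order.TTheory GRing.Theory Num.Theory.
Local Open Scope ring_scope.

(* For ψ = a φ1 + b φ2, the restriction χ_L ψ is an approximate eigenvector of H_L:
   since Hψ = Eψ, the residual (H_L - E) χ_L ψ only involves the values of ψ just outside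
   Λ_L, which are O(L^-β) by decay, so ‖(H_L - E) χ_L ψ‖² = O(L^(d-2β)) ‖χ_L ψ‖²; the
   norm ‖χ_L ψ‖ is bounded below by Cramer's rule at two points where (φ1, φ2) is
   non-degenerate.  For a real symmetric A, a subspace U on which ‖(A - E) w‖ ≤ ε ‖w‖
   meets the sum of the eigenspaces for eigenvalues outside [E - ε, E + ε] trivially
   (eigenspaces are orthogonal, so there ‖(A - E) w‖ > ε ‖w‖); since A is diagonalizable,
   the eigenspaces for eigenvalues inside [E - ε, E + ε] span at least dim U = 2 dimensions. *)

Section SquaredNorm.
Variable R : realDomainType.

Definition sqnorm n (x : 'rV[R]_n) : R := \sum_j x 0 j ^+ 2.

Lemma sqnormE n (x : 'rV[R]_n) : sqnorm x = (x *m x^T) 0 0.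
Proof. by rewrite !mxE; apply: eq_bigr => j _; rewrite !mxE expr2. Qed.

Lemma sqnormZ n a (x : 'rV[R]_n) : sqnorm (a *: x) = a ^+ 2 * sqnorm x.
Proof. by rewrite mulr_sumr; apply: eq_bigr => j _; rewrite mxE exprMn. Qed.

Lemma sqnorm_ge0 n (x : 'rV[R]_n) : 0 <= sqnorm x.
Proof. by apply: sumr_ge0 => j _; apply: sqr_ge0. Qed.

Lemma sqnorm_gt0 n (x : 'rV[R]_n) : x != 0 -> 0 < sqnorm x.
Proof.
move=> x0; rewrite lt_def sqnorm_ge0 andbT psumr_eq0 => [|j _]; last exact: sqr_ge0.
apply: contra x0 => /allP x0; apply/eqP/rowP => j; rewrite mxE.
by apply/eqP; rewrite -sqrf_eq0; apply: x0; rewrite mem_index_enum.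
Qed.

Lemma sqr_le_of_norm (x y : R) : `|x| <= y -> x ^+ 2 <= y ^+ 2.
Proof.
move=> xy; have y0 := le_trans (normr_ge0 x) xy.
by rewrite -real_normK ?num_real // lerXn2r ?nnegrE.
Qed.

Lemma sqnorm_sum_orthogonal n (I : finType) (P : pred I) (v : I -> 'rV[R]_n) :
  (forall i j, i != j -> v i *m (v j)^T = 0) ->
  sqnorm (\sum_(i | P i) v i) = \sum_(i | P i) sqnorm (v i).
Proof.
move=> orth; rewrite sqnormE linear_sum mulmx_suml summxE.
apply: eq_bigr => i Pi; rewrite mulmx_sumr summxE (bigD1 i) //= -sqnormE.
by rewrite big1 ?addr0 // => j /andP[_ ji]; rewrite orth ?mxE // eq_sym.
Qed.

End SquaredNorm.

Section SymmetricSpectrum.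
Variable R : rcfType.

Lemma symmetric_eigenspace_orthogonal n (A : 'M[R]_n) a b (u v : 'rV_n) :
  A^T = A -> a != b -> (u <= eigenspace A a)%MS -> (v <= eigenspace A b)%MS ->
  u *m v^T = 0.
Proof.
move=> As ab /eigenspaceP uA /eigenspaceP vA.
have : a *: (u *m v^T) = b *: (u *m v^T).
  by rewrite scalemxAl -uA -mulmxA -{1}As -trmx_mul vA linearZ scalemxAr.
by move/eqP; rewrite -subr_eq0 -scalerBl scaler_eq0 subr_eq0 (negbTE ab) => /eqP.
Qed.

Lemma symmetric_eigenspaces_full n (A : 'M[R]_n) :
  A^T = A -> row_full (\sum_(a <- rootsR (char_poly A)) eigenspace A a)%MS.
Proof.
(* The unitary diagonalizing the complexification of A has real eigenvalues, so each
   of its rows lies in a complexified real eigenspace. *)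
move=> As; pose f := real_complex R; set S := (\sum_(a <- _) _)%MS.
have Aherm : map_mx f A \is hermsymmx.
  apply/is_hermitianmxP; rewrite expr0 scale1r; apply/matrixP => i j.
  by rewrite !mxE -[in LHS]As mxE; exact: (esym (conjc_real _)).
have /orthomx_spectralP Adec := hermitian_normalmx Aherm.
set P := spectralmx _ in Adec; set X := spectral_diag _ in Adec.
have Xreal k : f (complex.Re (X 0 k)) = X 0 k.
  by apply: RRe_real; apply: (mxOverP (hermitian_spectral_diag_real Aherm)).
rewrite /row_full eqn_leq rank_leq_col -(mxrank_map f).
rewrite -{1}(mxrank_unitary (spectral_unitarymx (map_mx f A))).
apply: mxrankS; apply/row_subP => k; set lam := complex.Re (X 0 k).
have Pk_eigen : row k P *m map_mx f A = X 0 k *: row k P.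
  rewrite -row_mul [X in P *m X]Adec !mulmxA mulmxV ?spectral_unit // mul1mx.
  by rewrite row_mul row_diag_mx -scalemxAl -rowE.
have Pk : (row k P <= map_mx f (eigenspace A lam))%MS.
  by rewrite map_eigenspace; apply/eigenspaceP; rewrite Pk_eigen -[in LHS]Xreal.
apply: submx_trans Pk _; rewrite map_submx.
have [-> | lam_eig] := eqVneq (eigenspace A lam) 0; first exact: sub0mx.
have lam_root : lam \in rootsR (char_poly A).
  rewrite -(roots_on_rootsR (monic_neq0 (char_poly_monic A))).
  by rewrite in_itv /= -eigenvalue_root_char.
by rewrite /S (big_rem lam) //= addsmxSl.
Qed.

Lemma symmetric_spectral_gap n (A : 'M[R]_n) (r : seq R) (E eps : R) (w : 'rV_n) :
  A^T = A -> uniq r -> 0 <= eps ->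
  (w <= \sum_(a <- r | a \notin (`[E - eps, E + eps])%R) eigenspace A a)%MS -> w != 0 ->
  eps ^+ 2 * sqnorm w < sqnorm (w *m (A - E%:M)).
Proof.
move=> As r_uniq eps0; set J := `[E - eps, E + eps].
have gap a : a \notin J -> eps ^+ 2 < (a - E) ^+ 2.
  by rewrite in_itv /= negb_and -!ltNge => /orP[] ?; nra.
rewrite (big_nth 0) big_mkord => /sub_sumsmxP[u ->] w0.
pose v i := u i *m eigenspace A r`_i.
have vA i : v i *m A = r`_i *: v i by apply/eigenspaceP; rewrite submxMl.
have orth (c c' : R) i j : i != j -> (c *: v i) *m (c' *: v j)^T = 0.
  move=> ij; rewrite -scalemxAl linearZ -scalemxAr /=.
  rewrite (symmetric_eigenspace_orthogonal As _ (submxMl _ _) (submxMl _ _)) ?scaler0 //.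
  by rewrite nth_uniq.
have -> : (\sum_(i < size r | r`_i \notin J) v i) *m (A - E%:M) =
          \sum_(i < size r | r`_i \notin J) (r`_i - E) *: v i.
  by rewrite mulmx_suml; apply: eq_bigr => i _; rewrite mulmxBr vA mul_mx_scalar scalerBl.
have -> : \sum_(i < size r | r`_i \notin J) v i = \sum_(i < size r | r`_i \notin J) 1 *: v i.
  by apply: eq_bigr => i _; rewrite scale1r.
rewrite !sqnorm_sum_orthogonal => [|i j ij|i j ij]; rewrite ?orth // mulr_sumr.
have [i0 /andP[Ji0 vi0]] : exists i : 'I_(size r), (r`_i \notin J) && (v i != 0).
  apply/existsP; apply: contraNT w0 => /existsPn v0; apply/eqP/big1 => i Ji.
  by apply/eqP; move: (v0 i); rewrite Ji negbK.
rewrite (bigD1 i0) // [ltRHS](bigD1 i0) //= !sqnormZ expr1n mul1r.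
apply: ltr_leD; first by rewrite ltr_pM2r ?sqnorm_gt0 ?gap.
apply: ler_sum => i /andP[Ji _]; rewrite !sqnormZ expr1n mul1r.
by rewrite ler_wpM2r ?sqnorm_ge0 // ltW ?gap.
Qed.

Lemma rank_approx_eigenvectors n m (A : 'M[R]_n) (U : 'M[R]_(m, n)) (E eps : R) :
  A^T = A -> 0 <= eps ->
  (forall w : 'rV_n, (w <= U)%MS -> sqnorm (w *m (A - E%:M)) <= eps ^+ 2 * sqnorm w) ->
  (\rank U <= \rank (\sum_(a <- rootsR (char_poly A) | a \in (`[E - eps, E + eps])%R)
                       eigenspace A a))%N.
Proof.
move=> As eps0 approx; set J := (`[E - eps, E + eps])%R.
set S_in := (\sum_(a <- _ | _) _)%MS.
set S_out := (\sum_(a <- rootsR (char_poly A) | a \notin J) eigenspace A a)%MS.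
have full : (n <= \rank S_in + \rank S_out)%N.
  have := symmetric_eigenspaces_full As.
  rewrite /row_full (bigID (mem J)) /= => /eqP {1}<-; exact: mxrank_adds_leqif.
have capU : (U :&: S_out)%MS == 0.
  apply/rowV0P => w; rewrite sub_capmx => /andP[wU wS]; apply/eqP.
  apply: contraTT (approx w wU); rewrite -ltNge.
  exact: symmetric_spectral_gap (uniq_roots _ _ _) eps0 wS.
have := mxrank_sum_cap U S_out; rewrite (eqP capU) mxrank0 addn0.
have := rank_leq_col (U + S_out)%MS; lia.
Qed.

End SymmetricSpectrum.

Section TwoRows.
Variables (F : fieldType) (n : nat) (u1 u2 : 'rV[F]_n).

Lemma sub_adds_rVP (w : 'rV[F]_n) :
  reflect (exists a b, w = a *: u1 + b *: u2) (w <= u1 + u2)%MS.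
Proof.
apply: (iffP sub_addsmxP) => [[[c1 c2] /= ->] | [a [b ->]]].
  by exists (c1 0 0), (c2 0 0); rewrite -!mul_scalar_mx -!mx11_scalar.
by exists (a%:M, b%:M); rewrite /= !mul_scalar_mx.
Qed.

Lemma mxrank_adds_rV2 :
  (forall a b, a *: u1 + b *: u2 = 0 -> a = 0 /\ b = 0) -> \rank (u1 + u2)%MS = 2%N.
Proof.
move=> indep.
have u1_neq0 : u1 != 0.
  apply/eqP => u10; have [/eqP] : (1 : F) = 0 /\ (0 : F) = 0.
    by apply: indep; rewrite u10 scaler0 scale0r addr0.
  by rewrite oner_eq0.
have u2_neq0 : u2 != 0.
  apply/eqP => u20; have [_ /eqP] : (0 : F) = 0 /\ (1 : F) = 0.
    by apply: indep; rewrite u20 scaler0 scale0r add0r.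
  by rewrite oner_eq0.
have cap0 : (u1 :&: u2)%MS == 0.
  apply/rowV0P => w; rewrite sub_capmx => /andP[/sub_rVP[a ->] /sub_rVP[b ab]].
  have [a0 _] : a = 0 /\ - b = 0 by apply: indep; rewrite ab scaleNr subrr.
  by rewrite a0 scale0r.
have := mxrank_sum_cap u1 u2.
by rewrite (eqP cap0) mxrank0 addn0 !rank_rV u1_neq0 u2_neq0.
Qed.

End TwoRows.

Lemma cramer_bound (R : realDomainType) (a b p1 p2 q1 q2 : R) :
  (p1 * q2 - p2 * q1) ^+ 2 * (`|a| + `|b|) ^+ 2 <=
  8 * (`|p1| + `|p2| + `|q1| + `|q2|) ^+ 2 * ((a * p1 + b * p2) ^+ 2 + (a * q1 + b * q2) ^+ 2).
Proof.
set D := p1 * q2 - p2 * q1; set s := a * p1 + b * p2; set t := a * q1 + b * q2.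
set G := _ + `|q2|.
have aD : `|a| * `|D| <= `|s| * `|q2| + `|t| * `|p2|.
  rewrite -normrM (_ : a * D = s * q2 - t * p2); last by rewrite /D /s /t; ring.
  by rewrite -!normrM ler_normB.
have bD : `|b| * `|D| <= `|t| * `|p1| + `|s| * `|q1|.
  rewrite -normrM (_ : b * D = t * p1 - s * q1); last by rewrite /D /s /t; ring.
  by rewrite -!normrM ler_normB.
have abD : `|D| * (`|a| + `|b|) <= 2 * G * (`|s| + `|t|).
  have := normr_ge0 s; have := normr_ge0 t; have := normr_ge0 p1; have := normr_ge0 p2.
  have := normr_ge0 q1; have := normr_ge0 q2; rewrite /G; nra.
have st : (`|s| + `|t|) ^+ 2 <= 2 * (s ^+ 2 + t ^+ 2).
  rewrite -(real_normK (num_real s)) -(real_normK (num_real t)).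
  have := sqr_ge0 (`|s| - `|t|); lra.
rewrite -(real_normK (num_real D)) -exprMn.
apply: le_trans (sqr_le_of_norm (_ : _ <= 2 * G * (`|s| + `|t|))) _.
  by rewrite normrM normr_id (ger0_norm (addr_ge0 (normr_ge0 a) (normr_ge0 b))).
have G0 : 0 <= 2 * G by rewrite mulr_ge0 ?addr_ge0.
by rewrite exprMn (_ : 8 * G ^+ 2 = (2 * G) ^+ 2 * 2); [rewrite -mulrA ler_wpM2l ?exprn_ge0 | ring].
Qed.

Section Lattice.
Variables (R : realType) (d : nat).
Implicit Types (x y z : Zd d) (k l : 'I_d).

Lemma evec_entry k i : evec k 0 i = (i == k)%:R.
Proof. by rewrite mxE eqxx eq_sym. Qed.

Lemma evec_eq k l : (evec k == evec l) = (k == l).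
Proof.
apply/eqP/eqP => [/rowP/(_ k)|-> //]; rewrite !evec_entry eqxx eq_sym.
by case: eqP => // _ /eqP; rewrite oner_eq0.
Qed.

Lemma evec_neqN k l : (evec k == - evec l) = false.
Proof.
apply/negP => /eqP/rowP/(_ k); rewrite evec_entry mxE evec_entry eqxx.
by case: (k == l).
Qed.

Lemma normsqN z : normsq R (- z) = normsq R z.
Proof. by apply: eq_bigr => i _; rewrite mxE intrN sqrrN. Qed.

Lemma normsq_evec k : normsq R (evec k) = 1.
Proof.
rewrite /normsq (bigD1 k) //= big1 => [|i ik]; first by rewrite evec_entry eqxx expr1n addr0.
by rewrite evec_entry (negbTE ik) expr0n.
Qed.

Lemma normsq_eq1 z : normsq R z = 1 -> exists k, z = evec k \/ z = - evec k.
Proof.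
have -> : normsq R z = (\sum_i z 0 i ^+ 2)%:~R.
  by rewrite rmorph_sum; apply: eq_bigr => i _; rewrite rmorphXn.
move/eqP; rewrite -[1]/(1%:~R) eqr_int => /eqP sum1.
have [k zk] : exists k, z 0 k != 0.
  apply/existsP; apply: contraT => /existsPn z0; move: sum1.
  by rewrite big1 // => i _; rewrite (eqP (negPn (z0 i))) expr0n.
rewrite (bigD1 k) //= in sum1.
have rest_ge0 : 0 <= \sum_(i | i != k) z 0 i ^+ 2 by apply: sumr_ge0 => i _; apply: sqr_ge0.
have zk_gt0 : 0 < z 0 k ^+ 2 by rewrite exprn_even_gt0.
have [zk1 rest0] : z 0 k ^+ 2 = 1 /\ \sum_(i | i != k) z 0 i ^+ 2 = 0.
  by move: sum1 rest_ge0 zk_gt0; set t := z 0 k ^+ 2; set r := \sum_(i | _) _; lia.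
have zi i : i != k -> z 0 i = 0.
  move: rest0 => /eqP; rewrite psumr_eq0 => [/allP/(_ i (mem_index_enum _))|j _].
    by move=> /implyP h /h; rewrite sqrf_eq0 => /eqP.
  exact: sqr_ge0.
exists k; move/eqP: zk1; rewrite sqrf_eq1 => /orP[] /eqP zk1;
  [left; apply/rowP => i | right; apply/rowP => i; rewrite [RHS]mxE];
  by rewrite evec_entry; case: (eqVneq i k) => [->|ik]; rewrite ?zk1 ?zi ?oppr0.
Qed.

Lemma Delta_evec x y :
  Delta R y x = \sum_k ((y == x + evec k)%:R + (y == x - evec k)%:R).
Proof.
have shift e : (y == x + e) = (y - x == e) by rewrite subr_eq addrC.
under eq_bigr do rewrite !shift.
rewrite /Delta; set z := y - x.
suff evec_count k : \sum_l ((evec k == evec l)%:R + (evec k == - evec l)%:R) = 1 :> R.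
  case: ifP => [/eqP/normsq_eq1[k [->|->]] | z_ne1]; first by rewrite evec_count.
    by rewrite -[LHS](evec_count k); apply: eq_bigr => l _; rewrite eqr_oppLR eqr_opp addrC.
  rewrite big1 // => k _.
  have [zk | zk] := eqVneq z (evec k); first by rewrite zk normsq_evec eqxx in z_ne1.
  have [zNk | zNk] := eqVneq z (- evec k).
    by rewrite zNk normsqN normsq_evec eqxx in z_ne1.
  by rewrite addr0.
rewrite (bigD1 k) //= big1 => [|l lk]; first by rewrite eqxx evec_neqN mulr0n !addr0.
by rewrite evec_eq eq_sym (negbTE lk) evec_neqN mulr0n addr0.
Qed.

Definition exterior_sum (s : seq (Zd d)) (psi : Zd d -> R) x : R :=
  \sum_k ((x + evec k \notin s)%:R * psi (x + evec k)
          + (x - evec k \notin s)%:R * psi (x - evec k)).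

Lemma sum_Delta (s : seq (Zd d)) (psi : Zd d -> R) x : uniq s ->
  \sum_(y <- s) psi y * Delta R y x =
  \sum_k ((x + evec k \in s)%:R * psi (x + evec k) + (x - evec k \in s)%:R * psi (x - evec k)).
Proof.
move=> s_uniq; have pick z : \sum_(y <- s) psi y * (y == z)%:R = (z \in s)%:R * psi z.
  under eq_bigr do rewrite mulr_natr mulrb; rewrite -big_mkcond.
  have [zs | zNs] := boolP (z \in s).
    by rewrite -big_filter filter_pred1_uniq // big_seq1 mul1r.
  by rewrite big1_seq ?mul0r // => y /andP[/eqP-> zs]; rewrite zs in zNs.
under eq_bigr do rewrite Delta_evec mulr_sumr.
rewrite exchange_big; apply: eq_bigr => k _.
by under eq_bigr do rewrite mulrDr; rewrite big_split /= !pick.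
Qed.

End Lattice.

Section Operator.
Variables (R : realType) (d : nat) (V : Zd d -> R).

Lemma Hop_lincomb a b (phi1 phi2 : Zd d -> R) x :
  Hop V (fun y => a * phi1 y + b * phi2 y) x = a * Hop V phi1 x + b * Hop V phi2 x.
Proof.
rewrite /Hop (_ : \sum_i _ = a * \sum_i (phi1 (x + evec i) + phi1 (x - evec i)) +
                            b * \sum_i (phi2 (x + evec i) + phi2 (x - evec i))); first ring.
by rewrite !mulr_sumr -big_split; apply: eq_bigr => i _ /=; ring.
Qed.

Lemma HL_sym (L : R) : (HL V L)^T = HL V L.
Proof.
apply/matrixP => i j; rewrite !mxE /Delta -normsqN opprB.
by case: (eqVneq i j) => [->|ij]; rewrite ?mul0r.
Qed.

End Operator.

Lemma lin_indep2_points (R : realType) d (phi1 phi2 : Zd d -> R) :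
  lin_indep2 phi1 phi2 -> exists p q, phi1 p * phi2 q - phi2 p * phi1 q != 0.
Proof.
move=> indep; apply: contrapT => /forallNP no_p.
have det0 p q : phi1 p * phi2 q - phi2 p * phi1 q = 0.
  by apply: contrapT => det_pq; apply: (no_p p); exists q; apply/eqP.
have [phi1_0 | /existsNP[p phi1p]] := pselect (forall x, phi1 x = 0).
  have [/eqP] : (1 : R) = 0 /\ (0 : R) = 0.
    by apply: indep => x; rewrite phi1_0 mulr0 mul0r addr0.
  by rewrite oner_eq0.
have [_ phi1p0] : - phi2 p = 0 /\ phi1 p = 0.
  by apply: indep => x; rewrite -(det0 p x); ring.
exact: phi1p phi1p0.
Qed.

Section Box.
Variables (R : realType) (d : nat).

Lemma boxK_bounds (L : R) : 0 <= L -> L < (boxK L)%:R /\ (boxK L)%:R <= L + 1.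
Proof.
move=> L0; have /andP[floor_le lt_floor] := floor_itv L.
have -> : (boxK L)%:R = (Num.floor L + 1)%:~R :> R.
  by rewrite -[_%:R]/((boxK L)%:Z%:~R) /boxK -addn1 PoszD gez0_abs ?floor_ge0.
by split; rewrite // intrD lerD2r.
Qed.

Lemma box_uniq (L : R) : uniq (box_pts d L).
Proof.
rewrite filter_uniq // map_inj_uniq ?enum_uniq // => f g /rowP fg.
by apply/ffunP => i; move: (fg i); rewrite !mxE => /addIr [] /val_inj.
Qed.

Lemma mem_box (L : R) (x : Zd d) : (x \in box_pts d L) = in_box L x.
Proof.
rewrite mem_filter; case x_in : (in_box L x) => //=.
have bnd i : `|x 0 i| < (boxK L)%:Z.
  move/forallP: x_in => /(_ i) x_in; rewrite -(ltr_int R) intr_norm.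
  have L0 : 0 <= L by have := normr_ge0 ((x 0 i)%:~R : R); lra.
  have [lt_K _] := boxK_bounds L0; rewrite -[X in _ < X]/((boxK L)%:R); lra.
apply/mapP; exists [ffun i => inord (absz (x 0 i + (boxK L)%:Z))]; first by rewrite mem_enum.
apply/rowP => i; have := bnd i; rewrite ltr_norml !mxE ffunE.
by move: (x 0 i) (boxK L) => y K y_bnd; rewrite inordK; lia.
Qed.

Lemma size_box (L : R) : (size (box_pts d L) <= ((boxK L).*2.+1) ^ d)%N.
Proof.
rewrite size_filter; apply: leq_trans (count_size _ _) _.
by rewrite size_map -cardE card_ffun !card_ord.
Qed.

Lemma size_box_le (L : R) : 1 <= L -> (size (box_pts d L))%:R <= 5 ^+ d * L ^+ d.
Proof.
move=> L1; have [_ K_le] := boxK_bounds (le_trans ler01 L1).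
apply: le_trans (_ : (((boxK L).*2.+1) ^ d)%:R <= _); first by rewrite ler_nat size_box.
rewrite natrX -exprMn lerXn2r ?nnegrE ?mulr_ge0 ?ler0n 1?(le_trans ler01) //.
by rewrite -addn1 -mul2n natrD natrM; lra.
Qed.

Lemma in_box_of_lt (L : R) (x : Zd d) : 2 * \sum_i `|(x 0 i)%:~R| < L -> in_box L x.
Proof.
move=> x_lt; apply/forallP => i.
have : `|(x 0 i)%:~R| <= \sum_i `|(x 0 i)%:~R| :> R.
  by rewrite (bigD1 i) //= lerDl sumr_ge0.
lra.
Qed.

Lemma japan_outside_box (L : R) (y : Zd d) : 0 <= L -> ~~ in_box L y -> L / 2 <= japan R y.
Proof.
move=> L0; case/forallPn => i; rewrite -leNgt => yi_ge.
rewrite /japan -[L / 2]ger0_norm ?divr_ge0 // -sqrtr_sqr ler_wsqrtr //.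
have : (y 0 i)%:~R ^+ 2 <= normsq R y.
  by rewrite /normsq (bigD1 i) //= lerDl; apply: sumr_ge0 => k _; apply: sqr_ge0.
have : (L / 2) ^+ 2 <= (y 0 i)%:~R ^+ 2 :> R.
  by rewrite -[leRHS]real_normK ?num_real // lerXn2r // nnegrE divr_ge0.
lra.
Qed.

End Box.

Section Decay.
Variables (R : realType) (d : nat) (beta C : R) (phi : Zd d -> R).
Hypothesis decay : forall x, `|phi x| <= C * japan R x `^ (- beta).

Lemma decay_const_ge0 : 0 <= C.
Proof.
have := decay 0; have -> : japan R (0 : Zd d) = 1.
  by rewrite /japan /normsq big1 ?addr0 ?sqrtr1 // => i _; rewrite mxE expr0n.
by rewrite powR1 mulr1; apply: le_trans.
Qed.

Lemma decay_outside_box (L : R) (y : Zd d) : 0 < L -> 0 <= beta -> ~~ in_box L y ->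
  `|phi y| <= C * (2 `^ beta * L `^ (- beta)).
Proof.
move=> L_gt0 beta0 y_out; apply: le_trans (decay y) _.
apply: ler_wpM2l; first exact: decay_const_ge0.
have L2_gt0 : 0 < L / 2 by rewrite divr_gt0.
have L2_le := japan_outside_box (ltW L_gt0) y_out.
have -> : 2 `^ beta * L `^ (- beta) = (L / 2) `^ (- beta).
  rewrite powRM ?invr_ge0 ?ler0n 1?ltW // mulrC -powR_inv1 ?ler0n //.
  by rewrite -powRrM mulrNN mul1r.
rewrite !powRN lef_pV2 ?posrE ?powR_gt0 ?(lt_le_trans L2_gt0) //.
by rewrite ge0_ler_powR // nnegrE ltW // (lt_le_trans L2_gt0).
Qed.

End Decay.

Section BoxRestriction.
Variables (R : realType) (d : nat) (L : R).

Definition box_restr (psi : Zd d -> R) : 'rV[R]_(size (box_pts d L)) :=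
  \row_j psi (box_pts d L)`_j.

Lemma box_restr_lincomb (a b : R) (phi1 phi2 : Zd d -> R) :
  a *: box_restr phi1 + b *: box_restr phi2 = box_restr (fun x => a * phi1 x + b * phi2 x).
Proof. by apply/rowP => j; rewrite !mxE. Qed.

Lemma sqnorm_box_restr_ge (psi : Zd d -> R) (p q : Zd d) :
  in_box L p -> in_box L q -> p != q -> psi p ^+ 2 + psi q ^+ 2 <= sqnorm (box_restr psi).
Proof.
rewrite -!mem_box => p_in q_in pq; have s_uniq := box_uniq d L.
have restrE : sqnorm (box_restr psi) = \sum_(y <- box_pts d L) psi y ^+ 2.
  by rewrite [RHS](big_nth 0) big_mkord; apply: eq_bigr => j _; rewrite mxE.
have q_in' : q \in [seq y <- box_pts d L | y != p] by rewrite mem_filter q_in andbT eq_sym.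
rewrite restrE (bigD1_seq p) //= -big_filter (bigD1_seq q) ?(filter_uniq _ s_uniq) //=.
by rewrite addrA lerDl sumr_ge0 // => y _; apply: sqr_ge0.
Qed.

End BoxRestriction.

Section BoxResidual.
Variables (R : realType) (d : nat) (V : Zd d -> R) (E L : R) (psi : Zd d -> R).
Hypothesis psi_eigen : forall x, Hop V psi x = E * psi x.
Local Notation s := (box_pts d L).

Lemma box_residualE j :
  (box_restr L psi *m (HL V L - E%:M)) 0 j = exterior_sum s psi s`_j.
Proof.
set x := s`_j; rewrite mulmxBr mul_mx_scalar !mxE.
have -> : \sum_i box_restr L psi 0 i * HL V L i j =
          V x * psi x - \sum_(y <- s) psi y * Delta R y x.
  have diag : \sum_(i < size s) psi s`_i * ((i == j)%:R * V s`_i) = V x * psi x.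
    rewrite (bigD1 j) //= eqxx mul1r mulrC big1 ?addr0 // => i ij.
    by rewrite (negbTE ij) mul0r mulr0.
  under eq_bigr do rewrite !mxE mulrDr mulrN.
  by rewrite big_split sumrN /= diag [in RHS](big_nth 0) big_mkord addrC.
rewrite sum_Delta ?box_uniq // -(psi_eigen x) /Hop /exterior_sum.
have notin_in (b : bool) (a : R) : (~~ b)%:R * a = a - b%:R * a.
  by case: b; rewrite ?mul1r ?mul0r ?subrr ?subr0.
under [RHS]eq_bigr do rewrite !notin_in addrACA -opprD.
rewrite sumrB; lra.
Qed.

Lemma box_residual_le B : 0 <= B -> (forall y, ~~ in_box L y -> `|psi y| <= B) ->
  sqnorm (box_restr L psi *m (HL V L - E%:M)) <= (size s)%:R * (2 * d%:R * B) ^+ 2.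
Proof.
move=> B0 psi_out.
have term_le y : `|(y \notin s)%:R * psi y| <= B.
  have [_|yNs] := boolP (y \in s); first by rewrite mul0r normr0.
  by rewrite mul1r psi_out // -mem_box.
have entry_le j : ((box_restr L psi *m (HL V L - E%:M)) 0 j) ^+ 2 <= (2 * d%:R * B) ^+ 2.
  rewrite box_residualE; apply: sqr_le_of_norm; apply: le_trans (ler_norm_sum _ _ _) _.
  have -> : 2 * d%:R * B = \sum_(k < d) (B + B) by rewrite sumr_const card_ord -mulr_natl; ring.
  by apply: ler_sum => k _; apply: le_trans (ler_normD _ _) (lerD _ _).
apply: le_trans (ler_sum _ (fun j _ => entry_le j)) _.
by rewrite sumr_const card_ord [leRHS]mulr_natl.
Qed.

End BoxResidual.

Section BoxEstimate.
Variables (R : realType) (d : nat) (beta C1 C2 : R) (phi1 phi2 : Zd d -> R) (p q : Zd d).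
Hypotheses (beta_ge0 : 0 <= beta)
  (decay1 : forall x, `|phi1 x| <= C1 * japan R x `^ (- beta))
  (decay2 : forall x, `|phi2 x| <= C2 * japan R x `^ (- beta))
  (det_pq : phi1 p * phi2 q - phi2 p * phi1 q != 0).

(* 5^d L^d bounds the size of the box, 2 d (C1 + C2) 2^β L^-β (|a| + |b|) the residual
   at each point, and Cramer's rule at p, q bounds (|a| + |b|)^2 by the last factor
   times ‖χ_L ψ‖². *)
Definition box_estimate_const : R :=
  8 * 5 ^+ d * (2 * d%:R * (C1 + C2) * 2 `^ beta) ^+ 2 *
  ((`|phi1 p| + `|phi2 p| + `|phi1 q| + `|phi2 q|) / (phi1 p * phi2 q - phi2 p * phi1 q)) ^+ 2.

Lemma box_span_rank L : in_box L p -> in_box L q ->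
  \rank (box_restr L phi1 + box_restr L phi2)%MS = 2%N.
Proof.
move=> p_in q_in; apply: mxrank_adds_rV2 => a b; rewrite box_restr_lincomb => /rowP ab0.
have psi0 x : in_box L x -> a * phi1 x + b * phi2 x = 0.
  rewrite -mem_box -index_mem => x_idx; have := ab0 (Ordinal x_idx).
  by rewrite !mxE /= nth_index // -index_mem.
have := cramer_bound a b (phi1 p) (phi2 p) (phi1 q) (phi2 q).
rewrite !psi0 // expr0n addr0 mulr0 pmulr_rle0 ?exprn_even_gt0 // => ab_le0.
have := normr_ge0 a; have := normr_ge0 b; have := sqr_ge0 (`|a| + `|b|).
by split; apply/normr0_eq0; nra.
Qed.

Lemma box_span_residual_le V E L :
  (forall x, Hop V phi1 x = E * phi1 x) -> (forall x, Hop V phi2 x = E * phi2 x) ->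
  1 <= L -> in_box L p -> in_box L q ->
  forall w, (w <= box_restr L phi1 + box_restr L phi2)%MS ->
  sqnorm (w *m (HL V L - E%:M)) <=
  box_estimate_const * ((L `^ (- beta)) ^+ 2 * L ^+ d) * sqnorm w.
Proof.
move=> eig1 eig2 L1 p_in q_in w /sub_adds_rVP[a [b ->]]; rewrite box_restr_lincomb.
set psi := fun x => _.
have psi_eigen x : Hop V psi x = E * psi x by rewrite Hop_lincomb eig1 eig2 /psi; ring.
have L_gt0 : 0 < L by apply: lt_le_trans L1.
set M := 2 `^ beta * L `^ (- beta).
have M0 : 0 <= M by rewrite mulr_ge0 ?powR_ge0.
have C1M := mulr_ge0 (decay_const_ge0 decay1) M0.
have C2M := mulr_ge0 (decay_const_ge0 decay2) M0.
have psi_out y : ~~ in_box L y -> `|psi y| <= (`|a| + `|b|) * ((C1 + C2) * M).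
  move=> y_out; have := decay_outside_box decay1 L_gt0 beta_ge0 y_out.
  have := decay_outside_box decay2 L_gt0 beta_ge0 y_out.
  rewrite -/M => phi2_le phi1_le; apply: le_trans (ler_normD _ _) _; rewrite !normrM.
  have := normr_ge0 a; have := normr_ge0 b; nra.
have B0 : 0 <= (`|a| + `|b|) * ((C1 + C2) * M) by rewrite mulr_ge0 ?addr_ge0 // mulrDl addr_ge0.
apply: le_trans (box_residual_le psi_eigen B0 psi_out) _.
have p_neq_q : p != q by apply: contraNneq det_pq => <-; rewrite mulrC subrr.
have ab_sq : (`|a| + `|b|) ^+ 2 <=
    8 * ((`|phi1 p| + `|phi2 p| + `|phi1 q| + `|phi2 q|) /
         (phi1 p * phi2 q - phi2 p * phi1 q)) ^+ 2 * sqnorm (box_restr L psi).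
  rewrite expr_div_n mulrA mulrAC ler_pdivlMr ?exprn_even_gt0 // mulrC.
  apply: le_trans (cramer_bound a b (phi1 p) (phi2 p) (phi1 q) (phi2 q)) _.
  by rewrite ler_wpM2l ?mulr_ge0 ?sqr_ge0 ?(sqnorm_box_restr_ge psi p_in q_in p_neq_q).
rewrite (_ : (2 * d%:R * ((`|a| + `|b|) * ((C1 + C2) * M))) ^+ 2 =
             (2 * d%:R * (C1 + C2) * M) ^+ 2 * (`|a| + `|b|) ^+ 2); last by ring.
apply: le_trans (ler_pM (ler0n _ _) (mulr_ge0 (sqr_ge0 _) (sqr_ge0 _)) (size_box_le d L1)
                        (ler_wpM2l (sqr_ge0 _) ab_sq)) _.
by rewrite le_eqVlt /box_estimate_const /M; apply/orP; left; apply/eqP; ring.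
Qed.

End BoxEstimate.

Lemma powR_shift_half_sqr (R : realType) (L x : R) n : 0 < L ->
  (L `^ (x + n%:R / 2)) ^+ 2 = (L `^ x) ^+ 2 * L ^+ n.
Proof.
move=> L_gt0; have L_neq0 := gt_eqF L_gt0.
rewrite powRD ?L_neq0 ?implybT // exprMn; congr (_ * _).
by rewrite expr2 -powRD ?L_neq0 ?implybT // -splitr powR_mulrn // ltW.
Qed.

Theorem lemma1 (R : realType) (d : nat) (beta : R) (hbeta : d%:R / 2 < beta)
    (phi1 phi2 : Zd d -> R)
    (l2_1 : sq_summable phi1) (l2_2 : sq_summable phi2)
    (dec1 : has_decay beta phi1) (dec2 : has_decay beta phi2)
    (indep : lin_indep2 phi1 phi2) :
  exists C : R, forall (V : Zd d -> R) (E : R),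
    (forall x, Hop V phi1 x = E * phi1 x) ->
    (forall x, Hop V phi2 x = E * phi2 x) ->
    exists L0 : R, forall L : R, L0 <= L ->
      let epsL := C * L `^ (- beta + d%:R / 2) in
      (2 <= tr_specproj (`[E - epsL, E + epsL])%R (HL V L))%N.
Proof.
have beta_ge0 : 0 <= beta by apply: ltW (le_lt_trans _ hbeta); rewrite divr_ge0 ?ler0n.
have [p [q det_pq]] := lin_indep2_points indep.
case: dec1 dec2 => [C1 decay1] [C2 decay2].
set K := box_estimate_const beta C1 C2 phi1 phi2 p q.
have K_ge0 : 0 <= K.
  by rewrite mulr_ge0 ?sqr_ge0 // mulr_ge0 ?sqr_ge0 // mulr_ge0 ?exprn_ge0.
exists (Num.sqrt K) => V E eig1 eig2.
pose l1 (x : Zd d) : R := \sum_i `|(x 0 i)%:~R|.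
have l1_ge0 x : 0 <= l1 x by apply: sumr_ge0.
exists (2 * (1 + l1 p + l1 q)) => L L_ge /=.
have := l1_ge0 p; have := l1_ge0 q; rewrite /l1 in L_ge * => lq_ge0 lp_ge0.
have L1 : 1 <= L by lra.
have p_in : in_box L p by apply: in_box_of_lt; lra.
have q_in : in_box L q by apply: in_box_of_lt; lra.
rewrite -[leqLHS](box_span_rank det_pq p_in q_in).
apply: rank_approx_eigenvectors (HL_sym V L) _ _ => [|w w_in].
  by rewrite mulr_ge0 ?sqrtr_ge0 ?powR_ge0.
rewrite exprMn sqr_sqrtr // powR_shift_half_sqr; last exact: lt_le_trans ltr01 L1.
exact: (box_span_residual_le beta_ge0 decay1 decay2 det_pq eig1 eig2 L1 p_in q_in w_in).
Qed.
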